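(* Let $(\mathcal{X},\mathcal{Y},u,S)$ be a Blackwell approachability game in which every halfspace $H\supseteq S$ is forceable. Then for every horizon $T\ge1$ there is a strategy for Player 1 which, at each time $t\le T$, receives a prediction $v^t\in\mathbb{R}^d$ of the next payoff (arbitrary, revealed before $x^t$ is chosen) and chooses $x^t\in\mathcal{X}$ depending only on $v^1,\dots,v^t$ and past payoffs, such that for every sequence of predictions and every (possibly adaptive) sequence of Player 2 actions $y^1,\dots,y^T\in\mathcal{Y}$, \[ \min_{\hat{s}\in S}\Big\|\hat{s}-\frac1T\sum_{t=1}^Tu(x^t,y^t)\Big\|_2\le\frac{1}{\sqrt T}\Big(1+\frac2T\sum_{t=1}^T\|u(x^t,y^t)-v^t\|_2^2\Big). \]
   Context: A Blackwell approachability game $(\mathcal{X},\mathcal{Y},u,S)$ consists of compact convex action sets $\mathcal{X},\mathcal{Y}$, a biaffine vector payoff $u:\mathcal{X}\times\mathcal{Y}\to\mathbb{R}^d$, and a closed convex target set $S\subseteq\mathbb{R}^d$; at each time $t$ Player 1 chooses $x^t\in\mathcal{X}$, then Player 2 chooses $y^t\in\mathcal{Y}$, and Player 1 receives $u(x^t,y^t)$. A halfspace $H=\{z:\langle a,z\rangle\le b\}$ is forceable if there exists $x^*\in\mathcal{X}$ with $u(x^*,y)\in H$ for all $y\in\mathcal{Y}$. *)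

From HB Require Import structures.
From mathcomp Require Import all_boot all_order all_algebra.
From mathcomp Require Import all_classical all_reals all_analysis.
Set Implicit Arguments. Unset Strict Implicit. Unset Printing Implicit Defensive.
Import Order.TTheory GRing.Theory Num.Theory.
Import numFieldNormedType.Exports.
Local Open Scope classical_set_scope.
Local Open Scope ring_scope.

Section Blackwell.
Variable R : realType.

Definition dotv (d : nat) (a z : 'rV[R]_d) : R := \sum_(i < d) a 0 i * z 0 i.
Definition norm2 (d : nat) (z : 'rV[R]_d) : R := Num.sqrt (dotv z z).

Definition halfspace (d : nat) (a : 'rV[R]_d) (b : R) : set 'rV[R]_d :=
  [set z | dotv a z <= b].

Definition biaffine (n m d : nat) (X : set 'rV[R]_n) (Y : set 'rV[R]_m)
    (u : 'rV[R]_n -> 'rV[R]_m -> 'rV[R]_d) : Prop :=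
  (forall x1 x2 y (l : R), X x1 -> X x2 -> Y y -> 0 <= l <= 1 ->
     u (l *: x1 + (1 - l) *: x2) y = l *: u x1 y + (1 - l) *: u x2 y) /\
  (forall x y1 y2 (l : R), X x -> Y y1 -> Y y2 -> 0 <= l <= 1 ->
     u x (l *: y1 + (1 - l) *: y2) = l *: u x y1 + (1 - l) *: u x y2).

Definition forceable (n m d : nat) (X : set 'rV[R]_n) (Y : set 'rV[R]_m)
    (u : 'rV[R]_n -> 'rV[R]_m -> 'rV[R]_d) (H : set 'rV[R]_d) : Prop :=
  exists2 xs, X xs & forall y, Y y -> H (u xs y).

(* A predictive strategy for Player 1: given the predictions
   [:: v^1; ...; v^t] revealed so far (including the current one) and
   the past payoffs [:: u(x^1,y^1); ...; u(x^(t-1),y^(t-1))],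
   it outputs the action x^t. *)
Definition pred_strategy (n d : nat) := seq 'rV[R]_d -> seq 'rV[R]_d -> 'rV[R]_n.

Section Play.
Variables (n m d : nat) (u : 'rV[R]_n -> 'rV[R]_m -> 'rV[R]_d).
Variables (sigma : pred_strategy n d) (v : nat -> 'rV[R]_d) (y : nat -> 'rV[R]_m).
(* times are indexed 0,1,2,... (time t here is time t+1 in the paper) *)

Fixpoint payoff_hist (t : nat) : seq 'rV[R]_d :=
  match t with
  | 0 => [::]
  | t'.+1 => rcons (payoff_hist t')
               (u (sigma [seq v i | i <- iota 0 t'.+1] (payoff_hist t')) (y t'))
  end.

Definition play_action (t : nat) : 'rV[R]_n :=
  sigma [seq v i | i <- iota 0 t.+1] (payoff_hist t).

Definition play_payoff (t : nat) : 'rV[R]_d := u (play_action t) (y t).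
End Play.

End Blackwell.

(* Let A_t be the cumulative payoff before time t and v_t the
   prediction revealed at time t.  Player 1 projects the predicted average
   w_t = (A_t + v_t) / (t + 1) onto S, obtaining p_t, and plays an action
   forcing the halfspace through p_t orthogonal to w_t - p_t that contains S.

   The potential Phi_t = min_{q in S} |A_t - t q|^2 satisfies
   Phi_{t+1} <= Phi_t + |g_t - v_t|^2 (lemma [potential_step], an exact
   quadratic identity plus the two obtuse-angle inequalities at p_t), so
   Phi_T is at most the total squared prediction error E.  Dividing by T^2
   gives dist(A_T / T, S) <= sqrt(E) / T <= (1 + 2 E / T) / sqrt T. *)

From HB Require Import structures.
From mathcomp Require Import all_boot all_order all_algebra.
From mathcomp Require Import all_classical all_reals all_analysis.
From mathcomp Require Import ring lra.
Import Order.TTheory GRing.Theory Num.Theory.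
Import numFieldNormedType.Exports.
Local Open Scope classical_set_scope.
Local Open Scope ring_scope.
Set Implicit Arguments.
Unset Strict Implicit.

Lemma sqrt_le1D (R : realType) (x : R) : 0 <= x -> Num.sqrt x <= 1 + x.
Proof.
move=> x_ge0; rewrite -[1 + x]ger0_norm ?addr_ge0 // -sqrtr_sqr.
by rewrite ler_sqrt ?sqr_ge0 //; nra.
Qed.

Section Euclidean.
Variables (R : realType) (d : nat).
Implicit Types (a w z s c : 'rV[R]_d).

Lemma dotv_ge0 z : 0 <= dotv z z.
Proof. by apply: sumr_ge0 => i _; rewrite -expr2 sqr_ge0. Qed.

Lemma dotvBr a w z : dotv a (w - z) = dotv a w - dotv a z.
Proof. by rewrite /dotv -sumrB; apply: eq_bigr => i _; rewrite !mxE; ring. Qed.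

Lemma norm2_sqr z : norm2 z ^+ 2 = dotv z z.
Proof. exact/sqr_sqrtr/dotv_ge0. Qed.

Definition sqdist w s : R := dotv (w - s) (w - s).

Lemma sqdist_continuous w : continuous (sqdist w).
Proof.
apply: (@continuous_big _ _ +%R 0 xpredT _ _ _) => [|i _].
  exact: add_continuous.
have coord : continuous (fun s : 'rV[R]_d => (w - s) 0 i).
  move=> s; under eq_fun do rewrite !mxE.
  by apply: (@continuousB _ R^o); [exact: cst_continuous|exact: coord_continuous].
by move=> s; apply: continuousM; apply: coord.
Qed.

Lemma coord_le_dotv z j : `|z 0 j| <= dotv z z + 1.
Proof.
have coord_sq : z 0 j ^+ 2 <= dotv z z.
  rewrite /dotv (bigD1 j) //= -expr2 lerDl.
  by apply: sumr_ge0 => i _; rewrite -expr2 sqr_ge0.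
apply: le_trans (_ : z 0 j ^+ 2 + 1 <= _); last by rewrite lerD2r.
by rewrite ler_norml; apply/andP; split; nra.
Qed.

Lemma sqdist_sublevel_bounded w r : bounded_set [set s | sqdist w s <= r].
Proof.
exists (`|w| + r + 1); split; first by rewrite num_real.
move=> M /ltW leM s /= near_w; apply: le_trans leM.
rewrite -[s](subKr w) (le_trans (ler_normB _ _)) // -addrA lerD2l.
rewrite [leLHS]/Num.norm /= mx_normrE.
apply: bigmax_le => [|[i j] _ /=]; first by rewrite addr_ge0 // (le_trans (dotv_ge0 _) near_w).
by rewrite (ord1 i) (le_trans (coord_le_dotv _ j)) // lerD2r.
Qed.

(* a nonempty closed set has a point closest to w: minimize the continuous
   function sqdist w over the compact set of points of S no farther than s0 *)
Lemma closest_point_exists {S : set 'rV[R]_d} w {s0} : S s0 -> closed S ->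
  exists2 c, S c & forall s, S s -> sqdist w c <= sqdist w s.
Proof.
move=> Ss0 clS.
pose K := S `&` [set s | sqdist w s <= sqdist w s0].
have cK : compact K.
  apply: bounded_closed_compact.
    have [M [Mreal MK]] := sqdist_sublevel_bounded w (sqdist w s0).
    by exists M; split => // N /MK MN s [_ /MN].
  apply: closedI => //.
  apply: (@preimage_closed _ R _ [set r | r <= sqdist w s0]); last exact: closed_le.
  by move=> s _; exact: sqdist_continuous.
have K0 : K !=set0 by exists s0; split => /=.
have [c /set_mem [Sc cs0] cmin] :=
  EVT_min_rV K0 cK (continuous_subspaceT (@sqdist_continuous w)).
exists c => // s Ss; have [ss0|s0s] := leP (sqdist w s) (sqdist w s0).
  by apply: cmin; rewrite inE.
exact: le_trans cs0 (ltW s0s).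
Qed.

Lemma sqdist_segment w c s (l : R) :
  sqdist w (l *: s + (1 - l) *: c) =
  sqdist w c - 2 * l * dotv (w - c) (s - c) + l ^+ 2 * sqdist s c.
Proof.
rewrite /sqdist /dotv !mulr_sumr -sumrB -big_split /=.
by apply: eq_bigr => i _; rewrite !mxE; ring.
Qed.

Lemma closest_point_obtuse (S : set 'rV[R]_d) w c :
  convex_set (S : set (convex_lmodType 'rV[R]_d)) -> S c ->
  (forall s, S s -> sqdist w c <= sqdist w s) ->
  forall s, S s -> dotv (w - c) (s - c) <= 0.
Proof.
move=> cvxS Sc cmin s Ss; rewrite leNgt; apply/negP => del_gt0.
set del := dotv _ _ in del_gt0; set N := sqdist s c.
have N_ge0 : 0 <= N by exact: dotv_ge0.
(* moving from c towards s by the step l decreases the distance to w *)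
pose l := del / (N + del).
have l_gt0 : 0 < l by rewrite divr_gt0 // ltr_wpDl.
have lN : l * N = del - l * del.
  by rewrite -{1}[del](mulfVK (_ : N + del != 0)) ?gt_eqF ?ltr_wpDl // mulrDr addrK.
have l01 : 0 <= l <= 1 by rewrite ltW //= ler_pdivrMr ?ltr_wpDl // mul1r lerDr.
have Sl : S (l *: s + (1 - l) *: c).
  have := cvxS s c (Itv01 (proj1 (andP l01)) (proj2 (andP l01))).
  by rewrite !inE => /(_ Ss Sc).
have l2N : l ^+ 2 * N = l * del - l ^+ 2 * del by rewrite expr2 -mulrA lN; ring.
have := cmin _ Sl; rewrite sqdist_segment -/del l2N -mulrA.
have ldel_gt0 := mulr_gt0 l_gt0 del_gt0.
have l2del_gt0 : 0 < l ^+ 2 * del by rewrite expr2 -mulrA mulr_gt0.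
lra.
Qed.

Lemma projection_map (S : set 'rV[R]_d) s0 : S s0 -> closed S ->
  convex_set (S : set (convex_lmodType 'rV[R]_d)) ->
  {P : 'rV[R]_d -> 'rV[R]_d &
    forall w, S (P w) /\ forall s, S s -> dotv (w - P w) (s - P w) <= 0}.
Proof.
move=> Ss0 clS cvxS.
apply: (@choice _ _ (fun w p => S p /\ forall s, S s -> dotv (w - p) (s - p) <= 0)).
move=> w; have [c Sc cmin] := closest_point_exists w Ss0 clS.
by exists c; split => //; exact: closest_point_obtuse.
Qed.

Lemma potential_step (A v g p q : 'rV[R]_d) (t : R) : 0 <= t ->
  dotv ((t + 1)^-1 *: (A + v) - p) (g - p) <= 0 ->
  dotv ((t + 1)^-1 *: (A + v) - p) (q - p) <= 0 ->
  sqdist (A + g) ((t + 1) *: p) <= sqdist A (t *: q) + sqdist g v.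
Proof.
move=> t_ge0 g_far q_far.
set th := _ - p in g_far q_far; set b := (p - v) + t *: (p - q).
have t1_neq0 : t + 1 != 0 by rewrite gt_eqF // ltr_wpDl.
have -> : sqdist A (t *: q) + sqdist g v =
  sqdist (A + g) ((t + 1) *: p) - (2 * (t + 1)) * dotv th (g - p)
  - (2 * (t + 1) * t) * dotv th (q - p) + dotv b b.
  rewrite /th /b /sqdist /dotv !mulr_sumr -!sumrB -!big_split /=.
  by apply: eq_bigr => i _; rewrite !mxE; field.
have tq_far : 0 <= t * - dotv th (q - p) by rewrite mulr_ge0 ?oppr_ge0.
have := dotv_ge0 b; nra.
Qed.

Lemma norm2_average (A q : 'rV[R]_d) (T : R) : 0 < T ->
  norm2 (q - T^-1 *: A) = T^-1 * Num.sqrt (sqdist A (T *: q)).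
Proof.
move=> T_gt0; have -> : T^-1 * Num.sqrt (sqdist A (T *: q)) =
    Num.sqrt (T^-1 ^+ 2 * sqdist A (T *: q)).
  by rewrite sqrtrM ?sqr_ge0 // sqrtr_sqr ger0_norm // invr_ge0 ltW.
rewrite /norm2; congr Num.sqrt.
rewrite /sqdist /dotv mulr_sumr; apply: eq_bigr => i _; rewrite !mxE.
by field; rewrite gt_eqF.
Qed.

Lemma average_distance_bound (A q : 'rV[R]_d) (T : nat) (E : R) :
  (0 < T)%N -> sqdist A (T%:R *: q) <= E ->
  norm2 (q - T%:R^-1 *: A) <= (Num.sqrt T%:R)^-1 * (1 + 2 / T%:R * E).
Proof.
move=> T_gt0 dist_le; have T_gt0' : 0 < T%:R :> R by rewrite ltr0n.
have E_ge0 : 0 <= E := le_trans (dotv_ge0 _) dist_le.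
set D := sqdist A _ in dist_le *; set s := Num.sqrt T%:R.
have s_gt0 : 0 < s by rewrite sqrtr_gt0.
have invT : T%:R^-1 = s^-1 * s^-1 by rewrite -invfM -expr2 sqr_sqrtr ?ler0n.
have sqrt_avg : s^-1 * Num.sqrt D <= Num.sqrt (T%:R^-1 * E).
  rewrite -sqrtrV ?ler0n // -sqrtrM ?invr_ge0 ?ler0n //.
  by rewrite ler_sqrt ?mulr_ge0 ?invr_ge0 ?ler0n // ler_pM2l ?invr_gt0.
have TE_ge0 : 0 <= T%:R^-1 * E by rewrite mulr_ge0 ?invr_ge0 ?ler0n.
rewrite norm2_average // -/D {1}invT -[leLHS]mulrA ler_pM2l ?invr_gt0 //.
apply: le_trans sqrt_avg (le_trans (sqrt_le1D TE_ge0) _).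
by rewrite lerD2l -mulrA ler_peMl // ler1n.
Qed.
End Euclidean.

Section Game.
Variables (R : realType) (n m d : nat).
Variables (X : set 'rV[R]_n) (Y : set 'rV[R]_m).
Variables (u : 'rV[R]_n -> 'rV[R]_m -> 'rV[R]_d) (S : set 'rV[R]_d).

Definition halfspaces_forceable : Prop :=
  forall (a : 'rV[R]_d) (b : R), S `<=` halfspace a b ->
    forceable X Y u (halfspace a b).

(* the empty set lies in the empty halfspace <0, z> <= -1, which cannot be
   forced against a nonempty Y: so S is nonempty *)
Lemma forceable_target_nonempty : Y !=set0 -> halfspaces_forceable -> S !=set0.
Proof.
move=> [y0 Yy0] forceS; apply: contrapT => S_empty.
have S_empty_halfspace : S `<=` halfspace 0 (-1).
  by move=> s Ss; case: S_empty; exists s.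
have [xs _ /(_ y0 Yy0)] := forceS _ _ S_empty_halfspace.
by rewrite /halfspace /= /dotv big1 => [|i _]; rewrite ?mxE ?mul0r // ler0N1.
Qed.

Lemma forcing_map : X !=set0 -> halfspaces_forceable ->
  {F : 'rV[R]_d * R -> 'rV[R]_n & forall ab, X (F ab) /\
     (S `<=` halfspace ab.1 ab.2 -> forall y, Y y -> halfspace ab.1 ab.2 (u (F ab) y))}.
Proof.
move=> X0 forceS; apply: (@choice _ _ (fun ab x => X x /\
  (S `<=` halfspace ab.1 ab.2 -> forall y, Y y -> halfspace ab.1 ab.2 (u x y)))).
move=> [a b]; have [/forceS [xs Xxs xs_forces]|notS] := pselect (S `<=` halfspace a b).
  by exists xs.
by have [x0 Xx0] := X0; exists x0; split => // /notS.
Qed.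
End Game.

Lemma payoff_hist_play (R : realType) n m d (u : 'rV[R]_n -> 'rV[R]_m -> 'rV[R]_d)
    (sigma : pred_strategy R n d) v y t :
  payoff_hist u sigma v y t = [seq play_payoff u sigma v y i | i <- iota 0 t].
Proof.
elim: t => [//|t IH].
by rewrite -[in RHS](addn1 t) iotaD map_cat -IH cats1.
Qed.

Section PredictiveStrategy.
Variables (R : realType) (n m d : nat).
Variables (X : set 'rV[R]_n) (Y : set 'rV[R]_m).
Variables (u : 'rV[R]_n -> 'rV[R]_m -> 'rV[R]_d) (S : set 'rV[R]_d).

Variable P : 'rV[R]_d -> 'rV[R]_d.
Hypothesis P_spec :
  forall w, S (P w) /\ forall s, S s -> dotv (w - P w) (s - P w) <= 0.
Variable F : 'rV[R]_d * R -> 'rV[R]_n.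
Hypothesis F_spec : forall ab, X (F ab) /\
  (S `<=` halfspace ab.1 ab.2 -> forall y, Y y -> halfspace ab.1 ab.2 (u (F ab) y)).

Definition separating_halfspace (w : 'rV[R]_d) : 'rV[R]_d * R :=
  (w - P w, dotv (w - P w) (P w)).

Lemma separating_halfspace_contains (w : 'rV[R]_d) :
  S `<=` halfspace (separating_halfspace w).1 (separating_halfspace w).2.
Proof. by move=> s /(P_spec w).2; rewrite /halfspace /= dotvBr subr_le0. Qed.

(* at time t, with predictions v_0..v_t and past payoffs g_0..g_(t-1), force
   the halfspace separating S from the predicted average (sum g + v_t)/(t+1) *)
Definition predictive_strategy : pred_strategy R n d := fun vs gs =>
  F (separating_halfspace ((size vs)%:R^-1 *: (\sum_(g <- gs) g + last 0 vs))).

Lemma predictive_strategy_in_X vs gs : X (predictive_strategy vs gs).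
Proof. exact: (F_spec _).1. Qed.

Variables (v : nat -> 'rV[R]_d) (y : nat -> 'rV[R]_m).

Definition cumulative_payoff (t : nat) : 'rV[R]_d :=
  \sum_(i < t) play_payoff u predictive_strategy v y i.

(* w_t = (A_t + v_t) / (t + 1), the average payoff if the prediction is exact *)
Definition predicted_average (t : nat) : 'rV[R]_d :=
  (t%:R + 1)^-1 *: (cumulative_payoff t + v t).

Lemma predictive_action t : play_action u predictive_strategy v y t =
  F (separating_halfspace (predicted_average t)).
Proof.
rewrite /play_action {1}/predictive_strategy payoff_hist_play size_map size_iota.
rewrite big_map -[in iota 0 t.+1](addn1 t) iotaD map_cat last_cat /= -natr1.
by rewrite /predicted_average /cumulative_payoff -(big_mkord xpredT) /index_iota subn0.
Qed.

Lemma payoff_beyond_projection t : Y (y t) ->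
  dotv (predicted_average t - P (predicted_average t))
       (play_payoff u predictive_strategy v y t - P (predicted_average t)) <= 0.
Proof.
move=> Yyt; set w := predicted_average t.
have := (F_spec (separating_halfspace w)).2 (separating_halfspace_contains w) _ Yyt.
by rewrite /play_payoff predictive_action /halfspace /= dotvBr subr_le0.
Qed.

Lemma potential_bound T : (forall t, (t < T)%N -> Y (y t)) ->
  exists2 q, S q & sqdist (cumulative_payoff T) (T%:R *: q) <=
    \sum_(t < T) sqdist (play_payoff u predictive_strategy v y t) (v t).
Proof.
elim: T => [|T IH] Yy.
  exists (P 0); first exact: (P_spec 0).1.
  rewrite /cumulative_payoff !big_ord0 scale0r /sqdist subr0 /dotv big1 //.
  by move=> i _; rewrite mxE mul0r.
have [q Sq pot_q] := IH (fun t tT => Yy t (ltnW tT)).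
set p := P (predicted_average T).
exists p; first exact: (P_spec _).1.
have step := potential_step (ler0n R T)
  (payoff_beyond_projection (Yy T (ltnSn T))) ((P_spec _).2 q Sq).
rewrite /cumulative_payoff !big_ord_recr /= -natr1.
by apply: le_trans step _; rewrite lerD2r.
Qed.
End PredictiveStrategy.

Theorem mainTheorem6 (R : realType) (n m d : nat)
  (X : set 'rV[R]_n) (Y : set 'rV[R]_m)
  (u : 'rV[R]_n -> 'rV[R]_m -> 'rV[R]_d) (S : set 'rV[R]_d) :
  X !=set0 -> compact X -> convex_set (X : set (convex_lmodType 'rV[R]_n)) ->
  Y !=set0 -> compact Y -> convex_set (Y : set (convex_lmodType 'rV[R]_m)) ->
  biaffine X Y u ->
  closed S -> convex_set (S : set (convex_lmodType 'rV[R]_d)) ->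
  (forall (a : 'rV[R]_d) (b : R), S `<=` halfspace a b ->
      forceable X Y u (halfspace a b)) ->
  forall T : nat, (1 <= T)%N ->
  exists sigma : pred_strategy R n d,
    (forall vs gs, X (sigma vs gs)) /\
    forall (v : nat -> 'rV[R]_d) (y : nat -> 'rV[R]_m),
      (forall t, (t < T)%N -> Y (y t)) ->
      exists2 s, S s &
        norm2 (s - T%:R^-1 *: \sum_(t < T) play_payoff u sigma v y t)
        <= (Num.sqrt T%:R)^-1 *
           (1 + 2 / T%:R *
              \sum_(t < T) norm2 (play_payoff u sigma v y t - v t) ^+ 2).
Proof.
move=> X0 _ _ Y0 _ _ _ clS cvxS forceS T T_gt0.
have [s0 Ss0] := forceable_target_nonempty Y0 forceS.
have [P P_spec] := projection_map Ss0 clS cvxS.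
have [F F_spec] := forcing_map X0 forceS.
exists (predictive_strategy P F); split; first exact: predictive_strategy_in_X.
move=> v y Yy; have [q Sq potential] := potential_bound P_spec F_spec v Yy.
exists q => //; apply: average_distance_bound => //.
under [X in _ <= X]eq_bigr => t _ do rewrite norm2_sqr.
exact: potential.
Qed.
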